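(* Let $\mathbb F$ be a field of characteristic $p$, $S$ a quasi-thin scheme on $X$, $x\in X$, $\mathcal T=\mathcal T(x)$, $E_a^*=E_a^*(x)$. The following are equivalent: (i) $S$ is $p'$-valenced; (ii) $\mathcal T$ is semisimple; (iii) for every $R_a\in S$ the $\mathbb F$-algebra $E_a^*\mathcal TE_a^*=\{E_a^*ME_a^*:M\in\mathcal T\}$ (with identity $E_a^*$) is semisimple.
   Context: Let $X$ be a nonempty finite set. A scheme of class $d$ on $X$ is a partition $S=\{R_0,\dots,R_d\}$ of $X\times X$ into nonempty sets such that $R_0=\{(b,b):b\in X\}$; for each $c$ there is $c'$ with $R_{c'}=\{(f,e):(e,f)\in R_c\}$; and for all $i,j,k$ the intersection number $p_{ij}^k=|\{\ell\in X:(m,\ell)\in R_i,(\ell,n)\in R_j\}|$ does not depend on $(m,n)\in R_k$. The valency is $k_a=p_{aa'}^0$; quasi-thin means all $k_a\le 2$; $p'$-valenced means no $k_a$ is divisible by $p$ (every scheme is $0'$-valenced). For $y\in X$, $yR_a=\{z:(y,z)\in R_a\}$; $A_a\in M_X(\mathbb F)$ is the $(0,1)$ adjacency matrix of $R_a$, $E_a^*(y)$ is the diagonal $(0,1)$-matrix with ones exactly at positions indexed by $yR_a$, and $\mathcal T(y)$ is the $\mathbb F$-subalgebra of $M_X(\mathbb F)$ generated by $A_0,\dots,A_d,E_0^*(y),\dots,E_d^*(y)$. *)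

From HB Require Import structures.
From mathcomp Require Import all_boot all_order all_algebra.
Set Implicit Arguments. Unset Strict Implicit. Unset Printing Implicit Defensive.
Import GRing.Theory.
Local Open Scope ring_scope.

(* The underlying finite set X is 'I_n; a scheme of class d on X is given by
   the map  rel : X -> X -> 'I_d.+1  sending (y,z) to the index a with
   (y,z) \in R_a. *)

Section Schemes.
Variables (n d : nat) (rel : 'I_n -> 'I_n -> 'I_d.+1).

(* p_{ij}^k evaluated at the pair (m,m') *)
Definition inter_num (i j : 'I_d.+1) (m m' : 'I_n) : nat :=
  #|[set l : 'I_n | (rel m l == i) && (rel l m' == j)]|.

Definition is_scheme : Prop :=
  [/\
      forall a : 'I_d.+1, exists y z, rel y z = a,
      forall y z, (rel y z == ord0) = (y == z),
      forall c : 'I_d.+1, exists c' : 'I_d.+1,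
        forall y z, (rel y z == c') = (rel z y == c) &
      forall i j k : 'I_d.+1, forall m m' o o',
        rel m m' = k -> rel o o' = k -> inter_num i j m m' = inter_num i j o o'].

Definition tr_ind (c : 'I_d.+1) : 'I_d.+1 :=
  odflt c [pick c' : 'I_d.+1 | [forall y, forall z, (rel y z == c') == (rel z y == c)]].

(* valency k_a = p_{a a'}^0, evaluated at the pair (y,y) in R_0 *)
Definition valency (a : 'I_d.+1) (y : 'I_n) : nat := inter_num a (tr_ind a) y y.

Definition quasi_thin : Prop := forall a y, (valency a y <= 2)%N.

Definition p'_valenced (p : nat) : Prop := forall a y, ~~ (p %| valency a y)%N.

End Schemes.

(* characteristic p of a field (p = 0 means characteristic zero) *)
Definition has_char (F : fieldType) (p : nat) : Prop :=
  if p is 0 then forall q, q \in [pchar F] = false else p \in [pchar F].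

Section Terwilliger.
Variables (F : fieldType) (n d : nat) (rel : 'I_n -> 'I_n -> 'I_d.+1).

Definition adj (a : 'I_d.+1) : 'M[F]_n := \matrix_(y, z) (rel y z == a)%:R.

Definition dual_idem (x : 'I_n) (a : 'I_d.+1) : 'M[F]_n :=
  \matrix_(y, z) ((y == z) && (rel x y == a))%:R.

(* the subspace of M_X(F) spanned by the generators of T(x), encoded via mxvec *)
Definition T_gens (x : 'I_n) : 'A[F]_n :=
  ((\sum_a <<mxvec (adj a)>>) + (\sum_a <<mxvec (dual_idem x a)>>))%MS.

Definition generated_subalg (G A : 'A[F]_n) : Prop :=
  [/\ (mxvec 1%:M <= A)%MS, (G <= A)%MS, (A * A <= A)%MS &
      forall B : 'A[F]_n, (mxvec 1%:M <= B)%MS -> (G <= B)%MS ->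
        (B * B <= B)%MS -> (A <= B)%MS].

Definition corner (E : 'M[F]_n) (A : 'A[F]_n) : 'A[F]_n :=
  (A *m lin_mx (fun M : 'M[F]_n => E *m M *m E))%MS.

Definition nilpotent_space (I : 'A[F]_n) : Prop :=
  exists k, (iter k (fun J : 'A[F]_n => (J * I)%MS) I = 0).

(* A finite-dimensional F-algebra (with identity) is semisimple iff its
   (Jacobson) radical, the largest nilpotent two-sided ideal, is zero,
   i.e. it has no nonzero nilpotent two-sided ideal. *)
Definition semisimple_alg (A : 'A[F]_n) : Prop :=
  forall I : 'A[F]_n, (I <= A)%MS -> mx_ideal A I -> nilpotent_space I ->
    I = 0.

End Terwilliger.

From HB Require Import structures.
From mathcomp Require Import all_boot all_order all_algebra.
From mathcomp Require Import fingroup perm.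
Set Implicit Arguments. Unset Strict Implicit. Unset Printing Implicit Defensive.
Import GRing.Theory.

(* Fix x and write E_a for the dual idempotents.  In a quasi-thin scheme every
   fibre xR_a has one or two points, and swapping the two points of each fibre
   is an automorphism of the scheme fixing x: the pattern of R_c between two
   fibres has constant row and column sums, which on a 2 x 2 block forces
   invariance under the swap.  Hence every matrix of T = T(x) is invariant under
   the swap; T is also closed under transposition.  A valency k_a is divisible
   by p exactly when k_a = 0 in F, which, as k_a <= 2, only happens for k_a = 2
   in characteristic 2.

   If no k_a vanishes in F, let I be a nilpotent ideal of T (or of E_a T E_a)
   and X = E_a M E_b a block of some M in I.  The indicator of xR_a is an
   eigenvector of X J_ba (J the all-ones block) for k_a times a row sum of X, so
   the row sums of X vanish and X_yz' = -X_yz for the partner z' of z.  Then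
   e_y - e_y' is an eigenvector of X X^T for (2 X_yz)^2, singleton fibres being
   easier.  As X J_ba and X X^T lie in I, these eigenvalues vanish and X = 0.

   If k_a = 2 = 0 in F, the all-ones block J on xR_a satisfies J M J = 0 for all
   M in T, so S J S is a nonzero ideal of square zero in S = T and in
   S = E_a T E_a. *)

Lemma card_set1_filter (T : finType) (P : pred T) (z : T) :
  #|[set v in [set z] | P v]| = P z.
Proof.
case Pz: (P z); [rewrite /= -(cards1 z) | rewrite /= -(cards0 T)];
  by apply: eq_card => v; rewrite !inE; case: eqP => // ->.
Qed.

Lemma card_set2_filter (T : finType) (P : pred T) (z z' : T) :
  #|[set v in [set z; z'] | P v]| = (P z + (z' != z) && P z')%N.
Proof.
have [<-|nz] := eqVneq z' z; first by rewrite setUid card_set1_filter addn0.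
rewrite setIdE setIUl cardsU -!setIdE !card_set1_filter eq_card0 ?subn0 // => v.
by rewrite !inE; case: eqP => // ->; rewrite eq_sym (negbTE nz) andbF.
Qed.

Lemma eq_pair_of_counts (T : finType) (f : T -> T -> bool) (y y' z z' : T) :
  #|[set v in [set z; z'] | f y v]| = #|[set v in [set z; z'] | f y' v]| ->
  #|[set u in [set y; y'] | f u z]| = #|[set u in [set y; y'] | f u z']| ->
  f y' z' = f y z.
Proof.
rewrite !card_set2_filter.
have [<-|ny] := eqVneq y' y; have [<-|nz] := eqVneq z' z => //=;
  by case: (f y z) (f y z') (f y' z) (f y' z') => [] [] [] [].
Qed.

Section Scheme.
Variables (n d : nat) (rel : 'I_n -> 'I_n -> 'I_d.+1).
Hypothesis rel_scheme : is_scheme rel.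

Lemma rel_eq0 y z : (rel y z == ord0) = (y == z).
Proof. by case: rel_scheme. Qed.

Lemma rel_tr_ind a y z : (rel y z == tr_ind rel a) = (rel z y == a).
Proof.
rewrite /tr_ind; case: pickP => [c' /forallP/(_ y)/forallP/(_ z)/eqP // | no_tr].
case: rel_scheme => _ _ has_tr _; have [c' tr_c'] := has_tr a.
by have /forallP[] := negbT (no_tr c') => u; apply/forallP => v; rewrite tr_c'.
Qed.

Lemma rel_diag y : rel y y = ord0.
Proof. by apply/eqP; rewrite rel_eq0. Qed.

Lemma inter_num_rel i j m m' o o' : rel m m' = rel o o' ->
  inter_num rel i j m m' = inter_num rel i j o o'.
Proof. by case: rel_scheme => _ _ _ reg /reg; apply. Qed.

Variable x : 'I_n.

Definition fibre a := [set y | rel x y == a].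

Lemma valency_fibre a y : valency rel a y = #|fibre a|.
Proof.
rewrite /valency (@inter_num_rel _ _ _ _ x x); last by rewrite !rel_diag.
by apply: eq_card => l; rewrite !inE rel_tr_ind andbb.
Qed.

Lemma fibre_gt0 a : (0 < #|fibre a|)%N.
Proof.
case: rel_scheme => nonempty _ _ _; have [u [v uv_a]] := nonempty a.
rewrite -(valency_fibre a u); apply/card_gt0P; exists v.
by rewrite inE rel_tr_ind uv_a eqxx.
Qed.

Lemma card_fibre_row b c y y' : rel x y = rel x y' ->
  #|[set v in fibre b | rel y v == c]| = #|[set v in fibre b | rel y' v == c]|.
Proof.
have row_inter u : #|[set v in fibre b | rel u v == c]| = inter_num rel b (tr_ind rel c) x u.
  by apply: eq_card => v; rewrite !inE rel_tr_ind.
by move=> same_fibre; rewrite !row_inter; apply: inter_num_rel.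
Qed.

Lemma card_fibre_col a c z z' : rel x z = rel x z' ->
  #|[set u in fibre a | rel u z == c]| = #|[set u in fibre a | rel u z' == c]|.
Proof.
have col_inter v : #|[set u in fibre a | rel u v == c]| = inter_num rel a c x v.
  by apply: eq_card => u; rewrite !inE.
by move=> same_fibre; rewrite !col_inter; apply: inter_num_rel.
Qed.

Hypothesis rel_quasi_thin : quasi_thin rel.

Lemma card_fibre_le2 a : (#|fibre a| <= 2)%N.
Proof. by rewrite -(valency_fibre a x); apply: rel_quasi_thin. Qed.

Definition partner y := odflt y [pick z | (rel x z == rel x y) && (z != y)].

Lemma fibreE y : fibre (rel x y) = [set y; partner y].
Proof.
rewrite /partner; case: pickP => [w /andP[/eqP xw ny] | single]; last first.
  apply/setP => z; rewrite !inE orbb; apply/idP/eqP => [xz|-> //].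
  by move: (single z); rewrite xz => /negbFE/eqP.
apply/esym/eqP; rewrite eqEcard cards2 eq_sym ny /= card_fibre_le2 andbT.
by apply/subsetP => z; rewrite !inE => /orP[] /eqP->; rewrite ?xw.
Qed.

Lemma mem_fibre_partner y z : rel x z = rel x y -> z = y \/ z = partner y.
Proof.
move=> xz; have : z \in fibre (rel x y) by rewrite inE xz.
by rewrite fibreE !inE => /orP[] /eqP; [left | right].
Qed.

Lemma rel_partner y : rel x (partner y) = rel x y.
Proof.
have : partner y \in fibre (rel x y) by rewrite fibreE !inE eqxx orbT.
by rewrite inE => /eqP.
Qed.

Lemma partnerK : involutive partner.
Proof.
move=> y; have [fix_y|moved] := eqVneq (partner y) y; first by rewrite !fix_y.
have := fibreE (partner y); rewrite rel_partner fibreE => /setP/(_ y).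
by rewrite !inE eqxx eq_sym (negbTE moved) => /esym/eqP.
Qed.

Lemma partner_inj : injective partner.
Proof. exact: can_inj partnerK. Qed.

Lemma partner_root : partner x = x.
Proof.
have := fibreE x; rewrite rel_diag => /setP/(_ (partner x)).
by rewrite !inE rel_eq0 eqxx orbT => /eqP.
Qed.

Lemma rel_partner2 y z : rel (partner y) (partner z) = rel y z.
Proof.
pose c := rel y z; apply/eqP; rewrite -/c.
rewrite (@eq_pair_of_counts _ (fun u v => rel u v == c) y _ z) ?eqxx //.
  by rewrite -fibreE; apply: card_fibre_row; rewrite // rel_partner.
by rewrite -fibreE; apply: card_fibre_col; rewrite // rel_partner.
Qed.

End Scheme.

Local Open Scope ring_scope.

Lemma perm_mx_comm (R : pzSemiRingType) n (s : 'S_n) (A : 'M[R]_n) :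
  perm_mx s *m A = A *m perm_mx s <-> forall i j, A (s i) (s j) = A i j.
Proof.
have -> : A *m perm_mx s = col_perm s^-1 A by rewrite col_permE invgK.
rewrite -row_permE; split => [sA i j | sA].
  by move/matrixP/(_ i (s j)): sA; rewrite !mxE permK.
by apply/matrixP => i j; rewrite !mxE -{1}(permKV s j) sA.
Qed.

Lemma lin_mx_trmxK (F : fieldType) n : lin_mx (@trmx F n n) *m lin_mx trmx = 1%:M.
Proof.
apply/row_matrixP => i.
by rewrite row_mul rowE !mul_rV_lin /= mxvecK trmxK vec_mxK row1.
Qed.

Lemma mem_trmx_space (F : fieldType) n (S : 'A[F]_n) (A : 'M[F]_n) :
  (A \in S *m lin_mx trmx)%MS = (A^T \in S)%MS.
Proof.
apply/idP/idP => [/(submxMr (lin_mx trmx)) | SAt].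
  by rewrite mul_vec_lin -mulmxA lin_mx_trmxK mulmx1.
by rewrite -[A]trmxK -mul_vec_lin submxMr.
Qed.

Section GeneratedAlgebra.
Variables (F : fieldType) (n d : nat) (rel : 'I_n -> 'I_n -> 'I_d.+1) (x : 'I_n).
Variable T : 'A[F]_n.
Hypothesis T_gen : generated_subalg (T_gens F rel x) T.

Lemma mem1_T : (1%:M \in T)%MS.
Proof. by case: T_gen. Qed.

Lemma mulmx_T A B : (A \in T)%MS -> (B \in T)%MS -> (A *m B \in T)%MS.
Proof. by case: T_gen => _ _ TT _ TA TB; apply: submx_trans TT; apply: mem_mulsmx. Qed.

Lemma adj_T a : (adj F rel a \in T)%MS.
Proof.
case: T_gen => _ gensT _ _; apply: submx_trans gensT.
by apply: submx_trans (addsmxSl _ _); rewrite (sumsmx_sup a) ?genmxE.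
Qed.

Lemma dual_idem_T a : (dual_idem F rel x a \in T)%MS.
Proof.
case: T_gen => _ gensT _ _; apply: submx_trans gensT.
by apply: submx_trans (addsmxSr _ _); rewrite (sumsmx_sup a) ?genmxE.
Qed.

Lemma T_perm_invariant (s : 'S_n) :
    (forall y z, rel (s y) (s z) = rel y z) -> s x = x ->
  forall M, (M \in T)%MS -> forall u v, M (s u) (s v) = M u v.
Proof.
move=> s_aut s_x M TM; apply/perm_mx_comm.
suff /(submx_trans TM)/cent_rowP/(_ 0) : (T <= cent_mx (mxvec (perm_mx s)))%MS.
  by rewrite row_id mxvecK.
have cent_inv (A : 'M[F]_n) : (forall u v, A (s u) (s v) = A u v) ->
    (A \in cent_mx (mxvec (perm_mx s)))%MS.
  by move=> sA; apply/cent_rowP => i; rewrite row_id mxvecK; apply/perm_mx_comm.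
case: T_gen => _ _ _ T_min; apply: T_min; rewrite ?scalar_mx_cent //; last first.
  exact: cent_mx_ideal.
rewrite addsmx_sub; apply/andP; split; apply/sumsmx_subP => a _; rewrite genmxE;
  apply: cent_inv => u v; rewrite !mxE ?s_aut //.
by rewrite (inj_eq perm_inj) -{1}s_x s_aut.
Qed.

Hypothesis rel_scheme : is_scheme rel.

Lemma trmx_T M : (M \in T)%MS -> (M^T \in T)%MS.
Proof.
move=> TM; suff /(submx_trans TM) : (T <= T *m lin_mx trmx)%MS by rewrite mem_trmx_space.
case: T_gen => _ _ TT T_min; apply: T_min; rewrite ?mem_trmx_space ?trmx1 ?mem1_T //.
  rewrite addsmx_sub; apply/andP; split; apply/sumsmx_subP => a _;
    rewrite genmxE mem_trmx_space.
    have -> : (adj F rel a)^T = adj F rel (tr_ind rel a).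
      by apply/matrixP => u v; rewrite !mxE rel_tr_ind.
    exact: adj_T.
  have -> : (dual_idem F rel x a)^T = dual_idem F rel x a.
    by apply/matrixP => u v; rewrite !mxE eq_sym; case: eqP => // ->.
  exact: dual_idem_T.
by apply/mulsmx_subP => A B; rewrite !mem_trmx_space trmx_mul => TA TB; apply: mulmx_T.
Qed.

End GeneratedAlgebra.

Section NilpotentIdeals.
Variables (F : fieldType) (n : nat).
Implicit Types (A B J M Z : 'M[F]_n) (S I : 'A[F]_n).

Lemma memmx_lineP A B : reflect (exists c, A = c *: B) (A \in mxvec B)%MS.
Proof.
apply: (iffP sub_rVP) => [[c AcB] | [c ->]]; exists c; last by rewrite linearZ.
by apply: (can_inj mxvecK); rewrite AcB linearZ.
Qed.

Lemma nilpotent_space_eigen0 I Z (v : 'cV[F]_n) (l : F) :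
  nilpotent_space I -> (Z \in I)%MS -> v != 0 -> Z *m v = l *: v -> l = 0.
Proof.
case=> k Ik0 IZ nz_v Zv; pose Zpow m := iter m (fun B => B *m Z) Z.
have Zpow_in m : (Zpow m \in iter m (fun R => (R * I)%MS) I)%MS.
  by elim: m => //= m IHm; apply: mem_mulsmx.
have Zpow_v m : Zpow m *m v = l ^+ m.+1 *: v.
  by elim: m => [|m IHm]; rewrite ?expr1 //= -mulmxA Zv -scalemxAr IHm scalerA -exprS.
move: (Zpow_in k) (Zpow_v k); rewrite Ik0 => /memmx0 ->; rewrite mul0mx => /esym/eqP.
by rewrite scalemx_eq0 (negbTE nz_v) orbF expf_eq0 => /eqP.
Qed.

Lemma mulsmx_sandwich0 S J : (forall M, (M \in S)%MS -> J *m M *m J = 0) ->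
  (mxvec J * S * mxvec J = 0)%MS.
Proof.
move=> JSJ; apply/eqP; rewrite -submx0.
pose K := kermx (lin_mx (mulmxr J : 'M[F]_n -> 'M_n)).
have memK B : (B \in K)%MS = (B *m J == 0) by rewrite sub_kermx mul_vec_lin mxvec_eq0.
have KJ0 : (K * mxvec J <= (0 : 'A[F]_n))%MS.
  apply/mulsmx_subP => B M; rewrite memK => /eqP BJ /memmx_lineP[c ->].
  by rewrite -scalemxAr BJ scaler0 linear0 sub0mx.
apply: submx_trans KJ0; apply: mulsmxS (submx_refl _).
apply/mulsmx_subP => B M /memmx_lineP[c ->] SM.
by rewrite memK -!scalemxAl JSJ // scaler0.
Qed.

Lemma not_semisimple_sandwich0 S e J :
    (S * S <= S)%MS -> (e \in S)%MS -> e *m J = J -> J *m e = J ->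
    (J \in S)%MS -> J != 0 -> (forall M, (M \in S)%MS -> J *m M *m J = 0) ->
  ~ semisimple_alg S.
Proof.
move=> SS Se eJ Je SJ nzJ JSJ ss_S.
pose I := (S * mxvec J * S)%MS.
have SJS : (S * mxvec J <= S)%MS by apply: submx_trans SS; apply: mulsmxS SJ.
have IS : (I <= S)%MS by apply: submx_trans SS; apply: mulsmxS SJS _.
have JI : (J \in I)%MS.
  by rewrite -eJ -{1}Je mulmxA; apply: mem_mulsmx (mem_mulsmx Se (submx_refl _)) Se.
have ideal_I : mx_ideal S I.
  apply/andP; split; rewrite /left_mx_ideal /right_mx_ideal /I.
    by rewrite !mulsmxA; do 2!apply: mulsmxS _ (submx_refl _).
  by rewrite -mulsmxA; apply: mulsmxS SS.
have II0 : (I * I <= (0 : 'A[F]_n))%MS.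
  apply: submx_trans (_ : S * (mxvec J * S * mxvec J) * S <= _)%MS.
    rewrite /I !mulsmxA; do 2!apply: mulsmxS _ (submx_refl _).
    by rewrite -mulsmxA; apply: mulsmxS SS.
  by rewrite (mulsmx_sandwich0 JSJ) mulsmx0 muls0mx.
have I0 : I = 0 by apply: ss_S IS ideal_I _; exists 1%N; apply/eqP; rewrite -submx0.
by move: JI; rewrite I0 => /memmx0/eqP; apply/negP.
Qed.

End NilpotentIdeals.

Section Corner.
Variables (F : fieldType) (n : nat) (G : 'M[F]_n).

Definition corner_map (M : 'M[F]_n) := G *m M *m G.

Fact corner_map_is_linear : linear corner_map.
Proof. by move=> c A B; rewrite /corner_map mulmxDr mulmxDl -scalemxAr -scalemxAl. Qed.
HB.instance Definition _ := GRing.isLinear.Build F 'M[F]_n 'M[F]_n _ corner_map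
  corner_map_is_linear.

Lemma mem_corner (S : 'A[F]_n) A :
  (A \in corner G S)%MS <-> exists2 N, (N \in S)%MS & A = G *m N *m G.
Proof.
rewrite /corner; change (lin_mx _) with (lin_mx corner_map).
split => [/submxP[D] | [N SN ->]]; last first.
  by rewrite -[mxvec _](mul_vec_lin corner_map) submxMr.
rewrite mulmxA mul_rV_lin => /(congr1 vec_mx); rewrite !mxvecK => ->.
by exists (vec_mx (D *m S)); rewrite ?vec_mxK ?submxMl.
Qed.

End Corner.

Section TerwilligerAlgebra.
Variables (F : fieldType) (n d : nat) (rel : 'I_n -> 'I_n -> 'I_d.+1) (x : 'I_n).
Hypotheses (rel_scheme : is_scheme rel) (rel_quasi_thin : quasi_thin rel).
Variable T : 'A[F]_n.
Hypothesis T_gen : generated_subalg (T_gens F rel x) T.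

Implicit Types (a b c : 'I_d.+1) (u v y z : 'I_n) (M N X : 'M[F]_n).

Local Notation E := (dual_idem F rel x).
Local Notation fibre := (fibre rel x).
Local Notation partner := (partner rel x).
Local Notation fibreE := (fibreE rel_scheme x rel_quasi_thin).
Local Notation rel_partner := (rel_partner rel_scheme x rel_quasi_thin).
Local Notation partnerK := (partnerK rel_scheme x rel_quasi_thin).
Local Notation mem_fibre_partner := (@mem_fibre_partner _ _ _ rel_scheme x rel_quasi_thin).
Local Notation partner_inj := (@partner_inj _ _ _ rel_scheme x rel_quasi_thin).
Local Notation mem1_T := (mem1_T T_gen).
Local Notation mulmx_T := (mulmx_T T_gen).
Local Notation dual_idem_T := (dual_idem_T T_gen).
Local Notation trmx_T := (trmx_T T_gen rel_scheme).

Lemma dual_idem_sandwichE a b M u v :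
  (E a *m M *m E b) u v = (rel x u == a)%:R * M u v * (rel x v == b)%:R.
Proof.
rewrite mxE (bigD1 v) //= big1 => [|w /negbTE nwv]; last by rewrite [E b w v]mxE nwv mulr0.
rewrite [E b v v]mxE eqxx addr0 mxE (bigD1 u) //= big1 => [|w nwu].
  by rewrite [E a u u]mxE eqxx addr0.
by rewrite [E a u w]mxE eq_sym (negbTE nwu) mul0r.
Qed.

Lemma dual_idem_idem a : E a *m E a = E a.
Proof.
apply/matrixP => u v; rewrite -{1}[E a]mulmx1 dual_idem_sandwichE !mxE.
by case: (@eqP _ u v) => [->|_]; case: (_ == a); rewrite ?mulr1 ?mul1r ?mulr0 ?mul0r.
Qed.

Lemma trmx_dual_idem a : (E a)^T = E a.
Proof. by apply/matrixP => u v; rewrite !mxE eq_sym; case: eqP => // ->. Qed.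

Lemma partner_invariant M : (M \in T)%MS -> forall u v, M (partner u) (partner v) = M u v.
Proof.
move=> TM u v; pose s := perm partner_inj.
have sE w : s w = partner w by rewrite permE.
rewrite -!sE; apply: (T_perm_invariant T_gen (s := s)) TM u v => [y z|]; rewrite !sE.
  exact: rel_partner2.
exact: partner_root.
Qed.

Definition fibre_ind a : 'cV[F]_n := \col_u (rel x u == a)%:R.

Definition ones_block a b : 'M[F]_n := fibre_ind a *m (fibre_ind b)^T.

Lemma fibre_ind_dot a : (fibre_ind a)^T *m fibre_ind a = (#|fibre a|%:R)%:M.
Proof.
apply/matrixP => i j; rewrite !ord1 !mxE eqxx mulr1n -sum1_card natr_sum [RHS]big_mkcond.
by apply: eq_bigr => u _; rewrite !mxE inE; case: (_ == a); rewrite ?mulr1 ?mulr0.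
Qed.

Lemma ones_blockE a b : ones_block a b = E a *m const_mx 1 *m E b.
Proof.
by apply/matrixP => u v; rewrite dual_idem_sandwichE !mxE big_ord1 !mxE mulr1.
Qed.

Lemma ones_block_T a b : (ones_block a b \in T)%MS.
Proof.
have J_T : (const_mx 1 \in T)%MS.
  have -> : const_mx 1 = \sum_c adj F rel c.
    apply/matrixP => u v; rewrite summxE mxE (bigD1 (rel u v)) //= big1 => [|c /negbTE nc].
      by rewrite mxE eqxx addr0.
    by rewrite mxE eq_sym nc.
  by rewrite linear_sum summx_sub // => c _; apply: adj_T T_gen c.
by rewrite ones_blockE !mulmx_T ?dual_idem_T.
Qed.

Lemma fibre_row_sum_partner M b y : (M \in T)%MS ->
  \sum_(v in fibre b) M (partner y) v = \sum_(v in fibre b) M y v.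
Proof.
move=> TM; rewrite (reindex_inj partner_inj) /=.
by apply: eq_big => [v|v _]; rewrite ?inE ?rel_partner // partner_invariant.
Qed.

Lemma block_mul_fibre_ind a b M y : (M \in T)%MS -> rel x y = a ->
  E a *m M *m E b *m fibre_ind b = (\sum_(v in fibre b) M y v) *: fibre_ind a.
Proof.
move=> TM ya; apply/matrixP => u i; rewrite !mxE.
under eq_bigr => v _ do rewrite dual_idem_sandwichE !mxE.
have [ua|nua] := eqVneq (rel x u) a; last first.
  by rewrite big1 ?mulr0 // => v _; rewrite !mul0r.
rewrite mulr1; transitivity (\sum_(v in fibre b) M u v).
  rewrite [RHS]big_mkcond /=; apply: eq_bigr => v _; rewrite inE mul1r.
  by case: (_ == b); rewrite ?mulr1 ?mulr0.
by case: (mem_fibre_partner (etrans ua (esym ya))) => ->; rewrite ?fibre_row_sum_partner.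
Qed.

Definition partner_diff w : 'cV[F]_n := delta_mx w 0 - delta_mx (partner w) 0.

Lemma partner_diff_neq0 y : partner y != y -> partner_diff y != 0.
Proof.
move=> py_ny; apply/eqP => /matrixP/(_ y 0); rewrite !mxE eqxx eq_sym (negbTE py_ny) /=.
by move/eqP; rewrite subr0 oner_eq0.
Qed.

Lemma block_entry a b X u v : E a *m X *m E b = X ->
  X u v = (rel x u == a)%:R * X u v * (rel x v == b)%:R.
Proof. by move=> Xab; rewrite -{1}Xab dual_idem_sandwichE. Qed.

Lemma block_mul_partner_diff a b X y z :
    (X \in T)%MS -> E a *m X *m E b = X -> rel x y = a -> partner y != y ->
    X y (partner z) = - X y z ->
  X *m partner_diff z = (X y z *+ 2) *: partner_diff y.
Proof.
move=> TX Xab ya py_ny Xypz; apply/matrixP => u i; rewrite (ord1 i) mulmxBr -!colE !mxE eqxx.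
rewrite !andbT; have [->|nuy] := eqVneq u y.
  by rewrite Xypz eq_sym (negbTE py_ny) subr0 opprK mulr1 mulr2n.
have [->|nupy] := eqVneq u (partner y).
  rewrite -{1}(partnerK z) !partner_invariant // Xypz.
  by rewrite sub0r mulrN1 -opprD mulr2n.
have nua : rel x u != a.
  by apply/eqP => ua; case: (mem_fibre_partner (etrans ua (esym ya))); apply/eqP.
rewrite subr0 mulr0 (block_entry _ _ Xab) (block_entry u (partner z) Xab).
by rewrite (negbTE nua) !mul0r subr0.
Qed.

Section NilpotentBlock.
Variables (I : 'A[F]_n) (a b : 'I_d.+1) (X : 'M[F]_n).
Hypotheses (fibre_unit : forall c, #|fibre c|%:R != 0 :> F) (I_nil : nilpotent_space I).
Hypotheses (TX : (X \in T)%MS) (Xab : E a *m X *m E b = X).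

Lemma nilpotent_block_row_sum0 y : (X *m ones_block b a \in I)%MS -> rel x y = a ->
  \sum_(v in fibre b) X y v = 0.
Proof.
move=> IXJ ya; set rho := \sum_(v in _) _.
have nz_ind : fibre_ind a != 0.
  by apply/eqP => /matrixP/(_ y 0); rewrite !mxE ya eqxx => /eqP; rewrite oner_eq0.
have eigen : X *m ones_block b a *m fibre_ind a = (#|fibre a|%:R * rho) *: fibre_ind a.
  rewrite /ones_block -!mulmxA fibre_ind_dot mul_mx_scalar -scalemxAr.
  by rewrite -{1}Xab (block_mul_fibre_ind b TX ya) scalerA.
move/eqP: (nilpotent_space_eigen0 I_nil IXJ nz_ind eigen).
by rewrite mulf_eq0 (negbTE (fibre_unit a)) => /eqP.
Qed.

Lemma nilpotent_block_eq0 : (X *m ones_block b a \in I)%MS -> (X *m X^T \in I)%MS -> X = 0.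
Proof.
move=> IXJ IXXt; apply/matrixP => y z; rewrite mxE.
have [ya|nya] := eqVneq (rel x y) a; last by rewrite (block_entry _ _ Xab) (negbTE nya) !mul0r.
have [zb|nzb] := eqVneq (rel x z) b; last by rewrite (block_entry _ _ Xab) (negbTE nzb) mulr0.
have := nilpotent_block_row_sum0 IXJ ya; rewrite -zb fibreE.
have [->|pz_nz] := eqVneq (partner z) z; first by rewrite setUid big_set1.
rewrite big_setU1 ?big_set1 /= ?inE 1?eq_sym // => /eqP; rewrite addrC addr_eq0 => /eqP Xypz.
have two_unit : 2%:R != 0 :> F.
  by have := fibre_unit b; rewrite -zb fibreE cards2 (eq_sym z) pz_nz.
have [py_y|py_ny] := eqVneq (partner y) y.
  move/eqP: Xypz; rewrite -{1}py_y partner_invariant // -addr_eq0 -mulr2n -mulr_natr.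
  by rewrite mulf_eq0 (negbTE two_unit) orbF => /eqP.
have X_pd := block_mul_partner_diff TX Xab ya py_ny Xypz.
have Xt_pd : X^T *m partner_diff y = (X y z *+ 2) *: partner_diff z.
  have Xt_ba : E b *m X^T *m E a = X^T by rewrite -{2}Xab !trmx_mul !trmx_dual_idem mulmxA.
  have Xtzpy : X^T z (partner y) = - X^T z y.
    by rewrite !mxE -{1}(partnerK z) partner_invariant.
  by have := block_mul_partner_diff (trmx_T TX) Xt_ba zb pz_nz Xtzpy; rewrite mxE.
have eigen : X *m X^T *m partner_diff y = (X y z *+ 2) ^+ 2 *: partner_diff y.
  by rewrite -mulmxA Xt_pd -scalemxAr X_pd scalerA -expr2.
move/eqP: (nilpotent_space_eigen0 I_nil IXXt (partner_diff_neq0 py_ny) eigen).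
by rewrite expf_eq0 /= -mulr_natr mulf_eq0 (negbTE two_unit) orbF => /eqP.
Qed.

End NilpotentBlock.

Lemma corner_T a : (corner (E a) T <= T)%MS.
Proof.
by apply/memmx_subP => A /mem_corner[N TN ->]; rewrite !mulmx_T ?dual_idem_T.
Qed.

Lemma corner_mul a :
  (corner (E a) T * corner (E a) T <= corner (E a) T)%MS.
Proof.
apply/mulsmx_subP => A B /mem_corner[M TM ->] /mem_corner[N TN ->]; apply/mem_corner.
exists (M *m E a *m E a *m N); first by rewrite !mulmx_T ?dual_idem_T.
by rewrite !mulmxA.
Qed.

Lemma dual_idem_corner a : (E a \in corner (E a) T)%MS.
Proof. by apply/mem_corner; exists 1%:M; rewrite ?mem1_T ?mulmx1 ?dual_idem_idem. Qed.

Lemma ones_block_corner a : (ones_block a a \in corner (E a) T)%MS.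
Proof.
apply/mem_corner; exists (ones_block a a); first exact: ones_block_T.
by rewrite ones_blockE !mulmxA !dual_idem_idem -!mulmxA dual_idem_idem.
Qed.

Lemma trmx_corner a A : (A \in corner (E a) T)%MS -> (A^T \in corner (E a) T)%MS.
Proof.
case/mem_corner => N TN ->; apply/mem_corner; exists N^T; first exact: trmx_T.
by rewrite !trmx_mul trmx_dual_idem mulmxA.
Qed.

Section Semisimple.
Hypothesis fibre_unit : forall c, #|fibre c|%:R != 0 :> F.

Lemma semisimple_T : semisimple_alg T.
Proof.
move=> I IT /andP[TI IT'] I_nil; apply/eqP; rewrite -submx0; apply/memmx_subP => M IM.
suff -> : M = 0 by rewrite linear0 sub0mx.
have mulI A B : (A \in I)%MS -> (B \in T)%MS -> (A *m B \in I)%MS.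
  by move=> IA TB; apply: submx_trans IT'; apply: mem_mulsmx.
apply/matrixP => y z; pose X := E (rel x y) *m M *m E (rel x z).
have IX : (X \in I)%MS.
  by apply: mulI (dual_idem_T _); apply: submx_trans TI; apply: mem_mulsmx (dual_idem_T _) IM.
have TX := submx_trans IX IT.
have Xab : E (rel x y) *m X *m E (rel x z) = X.
  by rewrite /X !mulmxA dual_idem_idem -!mulmxA dual_idem_idem.
have -> : M y z = X y z by rewrite dual_idem_sandwichE !eqxx mulr1 mul1r.
rewrite (nilpotent_block_eq0 fibre_unit I_nil TX Xab) ?mxE //.
  exact: mulI (ones_block_T _ _).
exact: mulI (trmx_T TX).
Qed.

Lemma semisimple_corner a : semisimple_alg (corner (E a) T).
Proof.
move=> I IC /andP[CI IC'] I_nil; apply/eqP; rewrite -submx0; apply/memmx_subP => M IM.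
suff -> : M = 0 by rewrite linear0 sub0mx.
have mulI A B : (A \in I)%MS -> (B \in corner (E a) T)%MS -> (A *m B \in I)%MS.
  by move=> IA CB; apply: submx_trans IC'; apply: mem_mulsmx.
have CM := submx_trans IM IC; have TM := submx_trans CM (corner_T a).
have Maa : E a *m M *m E a = M.
  by case/mem_corner: CM => N _ ->; rewrite !mulmxA dual_idem_idem -!mulmxA dual_idem_idem.
apply: (nilpotent_block_eq0 fibre_unit I_nil TM Maa).
  exact: mulI (ones_block_corner a).
exact: mulI (trmx_corner CM).
Qed.

End Semisimple.

Lemma dual_idem_ones_block a : E a *m ones_block a a = ones_block a a.
Proof. by rewrite ones_blockE !mulmxA dual_idem_idem. Qed.

Lemma ones_block_dual_idem a : ones_block a a *m E a = ones_block a a.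
Proof. by rewrite ones_blockE -mulmxA dual_idem_idem. Qed.

Section Char2.
Variable a : 'I_d.+1.
Hypotheses (char2 : 2%:R = 0 :> F) (card_fibre2 : #|fibre a| = 2%N).

Lemma ones_block_sandwich0 N : (N \in T)%MS ->
  ones_block a a *m N *m ones_block a a = 0.
Proof.
move=> TN; have [y] : exists y, y \in fibre a by apply/card_gt0P; rewrite card_fibre2.
rewrite inE => /eqP ya.
have ENE_J : E a *m N *m E a *m ones_block a a = (\sum_(v in fibre a) N y v) *: ones_block a a.
  by rewrite /ones_block mulmxA (block_mul_fibre_ind a TN ya) scalemxAl.
have JJ : ones_block a a *m ones_block a a = 0.
  rewrite /ones_block mulmxA -(mulmxA _ _ (fibre_ind a)) fibre_ind_dot card_fibre2 char2.
  by rewrite mul_mx_scalar scale0r mul0mx.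
have corner_sandwich J : J *m E a = J -> E a *m J = J ->
    J *m N *m J = J *m (E a *m N *m E a *m J).
  by move=> JE EJ; rewrite -{1}JE -{2}EJ !mulmxA.
rewrite corner_sandwich ?ones_block_dual_idem ?dual_idem_ones_block //.
by rewrite ENE_J -scalemxAr JJ scaler0.
Qed.

Lemma ones_block_neq0 : ones_block a a != 0.
Proof.
have [y] : exists y, y \in fibre a by apply/card_gt0P; rewrite card_fibre2.
rewrite inE => ya; apply/eqP => /matrixP/(_ y y); rewrite !mxE big_ord1 !mxE ya mulr1.
by move/eqP; rewrite oner_eq0.
Qed.

Lemma not_semisimple_T : ~ semisimple_alg T.
Proof.
have TT : (T * T <= T)%MS by case: T_gen.
apply: (not_semisimple_sandwich0 TT mem1_T (mul1mx _) (mulmx1 _) (ones_block_T a a)).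
  exact: ones_block_neq0.
exact: ones_block_sandwich0.
Qed.

Lemma not_semisimple_corner : ~ semisimple_alg (corner (E a) T).
Proof.
apply: (not_semisimple_sandwich0 (corner_mul a) (dual_idem_corner a) (dual_idem_ones_block a)
  (ones_block_dual_idem a) (ones_block_corner a) ones_block_neq0).
by move=> M CM; apply/ones_block_sandwich0/(submx_trans CM (corner_T a)).
Qed.

End Char2.

End TerwilligerAlgebra.

Section Valencies.
Variables (F : fieldType) (n d : nat) (rel : 'I_n -> 'I_n -> 'I_d.+1) (x : 'I_n).
Hypothesis rel_scheme : is_scheme rel.

Lemma p'_valenced_fibre p : has_char F p ->
  p'_valenced rel p <-> forall a, #|fibre rel x a|%:R != 0 :> F.
Proof.
move=> charF; have dvd_char k : (0 < k)%N -> (p %| k)%N = (k%:R == 0 :> F).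
  case: p charF => [char0 | p charF] k_gt0; last exact: dvdn_pcharf.
  have /pcharf0P-> : [pchar F] =i pred0 by move=> q; rewrite char0.
  by rewrite dvd0n.
split => [p'_val a | fibre_unit a y].
  by have := p'_val a x; rewrite (valency_fibre _ x) // dvd_char ?fibre_gt0.
by rewrite (valency_fibre _ x) // dvd_char ?fibre_gt0 ?fibre_unit.
Qed.

Hypothesis rel_quasi_thin : quasi_thin rel.

Lemma card_fibre_char2 a : #|fibre rel x a|%:R = 0 :> F ->
  2%:R = 0 :> F /\ #|fibre rel x a| = 2%N.
Proof.
have := card_fibre_le2 rel_scheme x rel_quasi_thin a; have := fibre_gt0 rel_scheme x a.
by case: #|_| => [|[|[|k]]] // _ _ /eqP; rewrite oner_eq0.
Qed.

End Valencies.

Theorem corollary5p9 (F : fieldType) (p : nat) (n d : nat)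
    (rel : 'I_n -> 'I_n -> 'I_d.+1) (x : 'I_n) (T : 'A[F]_n) :
  has_char F p ->
  is_scheme rel -> quasi_thin rel ->
  generated_subalg (T_gens F rel x) T ->
  (p'_valenced rel p <-> semisimple_alg T) /\
  (semisimple_alg T <->
     forall a : 'I_d.+1, semisimple_alg (corner (dual_idem F rel x a) T)).
Proof.
move=> charF rel_scheme rel_quasi_thin T_gen.
have p'_val_iff := p'_valenced_fibre x rel_scheme charF.
have [/forallP fibre_unit | /forallPn[a /negPn/eqP]] :=
  boolP [forall a, #|fibre rel x a|%:R != 0 :> F].
  have p'_val : p'_valenced rel p by apply/p'_val_iff.
  have ss_T := semisimple_T rel_scheme rel_quasi_thin T_gen fibre_unit.
  have ss_corner a := semisimple_corner rel_scheme rel_quasi_thin T_gen fibre_unit (a := a).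
  by do 2!split.
case/(card_fibre_char2 rel_scheme rel_quasi_thin) => char2 card2.
have not_ss_T := not_semisimple_T rel_scheme rel_quasi_thin T_gen char2 card2.
have not_ss_corner := not_semisimple_corner rel_scheme rel_quasi_thin T_gen char2 card2.
split; split.
- by move/p'_val_iff/(_ a); rewrite card2 char2 eqxx.
- by move=> /not_ss_T.
- by move=> /not_ss_T.
- by move=> /(_ a)/not_ss_corner.
Qed.
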